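(* Let $X$ be a topological quandle and let $\{X_\alpha\}$ be the decomposition of $X$ into its path components, such that each $X_\alpha$ is indecomposable. Then $H_0(X)\cong\bigoplus_\alpha\mathbb{Z}$, with one copy of $\mathbb{Z}$ for each path component.
   Context: A quandle is a set with a binary operation $\triangleright$ such that $x\triangleright x=x$, each $\beta_y(x)=x\triangleright y$ is bijective, and $(x\triangleright y)\triangleright z=(x\triangleright z)\triangleright(y\triangleright z)$; write $x\triangleright^{-1}y=\beta_y^{-1}(x)$. A topological quandle is a topological space with a continuous quandle operation such that every $\beta_y$ is a homeomorphism. A path component $X_\alpha$ is called indecomposable if for every $x,y\in X_\alpha$ there exist $y_1,\dots,y_n\in X_\alpha$ and $e_1,\dots,e_n\in\{-1,1\}$ with $x=(\cdots((y\triangleright^{e_1}y_1)\triangleright^{e_2}y_2)\cdots)\triangleright^{e_n}y_n$. $C_0(X)$ is the free abelian group on points of $X$ (constant 0-simplices $\sigma_x$), $C_1(X)$ the free abelian group on paths $\sigma:[0,1]\to X$; for a path $\sigma_{[a,b]}$ from $a$ to $b$, $\partial_1\sigma_{[a,b]}=\sigma_a-\sigma_{a\triangleright b}$. $H_0(X)=C_0(X)/\partial_1(C_1(X))$. *)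

From HB Require Import structures.
From mathcomp Require Import all_boot all_algebra.
From mathcomp Require Import boolp classical_sets topology.
From mathcomp Require Import Rstruct Rstruct_topology.
From mathcomp Require Import freeg.

Set Implicit Arguments.
Unset Strict Implicit.
Unset Printing Implicit Defensive.

Import GRing.Theory.
Local Open Scope classical_set_scope.
Local Open Scope ring_scope.

Section QuandleDefs.
Context (X : topologicalType).

Definition is_path (sigma : Rdefinitions.R -> X) (a b : X) : Prop :=
  {within `[0%R, 1%R], continuous sigma} /\ sigma 0%R = a /\ sigma 1%R = b.

Definition path_conn (a b : X) : Prop := exists sigma, is_path sigma a b.

Definition path_comp (x : X) : set X := [set y | path_conn x y].

Definition path_components : set (set X) := [set A | exists x, A = path_comp x].

Definition pcomps : choiceType := {classic {A : set X | path_components A}}.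

Definition is_topological_quandle (op : X -> X -> X) : Prop :=
  [/\ continuous (fun p : X * X => op p.1 p.2),
      (forall x, op x x = x),
      (forall y, bijective (fun x => op x y)),
      (forall y, exists g : X -> X,
          cancel (fun x => op x y) g /\ cancel g (fun x => op x y) /\
          continuous (fun x => op x y) /\ continuous g) &
      (forall x y z, op (op x y) z = op (op x z) (op y z))].

(* chain op A y s x : x = (...((y |>^{e1} y1) |>^{e2} y2) ...) |>^{en} yn,
   where s = [:: (y1,b1); ...; (yn,bn)], e_i = 1 if b_i = true, -1 otherwise,
   all y_i in A.  z |>^{-1} w is the unique u with u |> w = z. *)
Fixpoint chain (op : X -> X -> X) (A : set X) (y : X) (s : seq (X * bool)) (x : X)
  : Prop :=
  match s with
  | [::] => x = y
  | (yi, b) :: s' =>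
      A yi /\ exists z, (if b then z = op y yi else op z yi = y) /\ chain op A z s' x
  end.

Definition indecomposable (op : X -> X -> X) (A : set X) : Prop :=
  forall x y, A x -> A y -> exists s, chain op A y s x.

(* C_0(X): free abelian group on the points of X; sigma_x is << x >>. *)
Definition C0 := {freeg X / int}.

Definition bd1 (op : X -> X -> X) (sigma : Rdefinitions.R -> X) : C0 :=
  << sigma 0%R >> - << op (sigma 0%R) (sigma 1%R) >>.

(* c lies in the image d_1(C_1(X)) : c = d_1 (sum_i k_i sigma_i) for paths sigma_i *)
Definition boundary (op : X -> X -> X) (c : C0) : Prop :=
  exists (n : nat) (k : 'I_n -> int) (sigma : 'I_n -> Rdefinitions.R -> X),
    (forall i, is_path (sigma i) (sigma i 0%R) (sigma i 1%R)) /\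
    c = \sum_(i < n) (bd1 op (sigma i) *~ k i).

End QuandleDefs.
Arguments pcomps X : clear implicits.
Arguments C0 X : clear implicits.

From HB Require Import structures.
From mathcomp Require Import all_boot all_algebra.
From mathcomp Require Import boolp classical_sets topology normedtype.
From mathcomp Require Import Rstruct Rstruct_topology.
From mathcomp Require Import freeg lra.

(* Sending each point to its path component induces an additive map from C_0(X)
   onto the free abelian group on the path components.  It kills boundaries: a
   path from a to b is carried by the continuous map a |> - to a path from
   a |> a = a to a |> b, so a and a |> b lie in the same component.  Conversely,
   fix a representative in every component; indecomposability joins each point x
   to the representative of its component by a chain of operations y |>^{+-1} y_i
   with y_i in that component, and each step of the chain is, up to sign, the
   boundary of a single path.  Hence c minus its image under "replace every point
   by its representative" is a boundary, and that image vanishes when c lies in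
   the kernel. *)

Set Implicit Arguments.
Unset Strict Implicit.
Unset Printing Implicit Defensive.

Import GRing.Theory Num.Theory order.Order.TTheory.
Local Open Scope classical_set_scope.
Local Open Scope ring_scope.

Local Notation R := Rdefinitions.R.
Local Notation I01 := (`[0%R, 1%R]%classic : set R).

Lemma affine_continuous (a b : R) : continuous (fun t : R => a * t + b).
Proof.
move=> t; apply: (@continuousD _ R^o _ (fun t => a * t) (fun=> b)).
  by apply: (@continuousM _ _ (fun=> a) id); [exact: cst_continuous | exact: cvg_id].
exact: cst_continuous.
Qed.

Lemma within_continuous_comp_within (T U V : topologicalType)
    (A : set T) (B : set U) (g : T -> U) (f : U -> V) :
  {homo g : t / A t >-> B t} -> {within A, continuous g} ->
  {within B, continuous f} -> {within A, continuous (f \o g)}.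
Proof.
move=> gAB /subspace_continuousP cg /subspace_continuousP cf.
apply/subspace_continuousP => t At; apply: cvg_comp (cf _ (gAB _ At)).
move=> W /(cg _ At); rewrite /= !nbhs_filterE /within /=.
by apply: filterS => s gW As; exact: gW As (gAB _ As).
Qed.

Lemma affine_path_continuous (X : topologicalType) (A : set R) (a b : R)
    (s : R -> X) :
  {homo (fun t => a * t + b) : t / A t >-> I01 t} ->
  {within I01, continuous s} -> {within A, continuous (s \o (fun t => a * t + b))}.
Proof.
move=> hA cs; apply: within_continuous_comp_within hA _ cs.
exact/continuous_subspaceT/affine_continuous.
Qed.

Section PathConnected.
Context (X : topologicalType).
Implicit Types a b c : X.

Lemma path_conn_refl a : path_conn a a.
Proof. by exists (fun=> a); split => //; exact/continuous_subspaceT/cst_continuous. Qed.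

Lemma path_conn_sym a b : path_conn a b -> path_conn b a.
Proof.
move=> [s [cs [s0 s1]]]; exists (s \o (fun t => -1 * t + 1)).
split; last by rewrite /= mulr0 add0r mulN1r addNr.
apply: affine_path_continuous cs => t; rewrite /= !in_itv /= => /andP[t0 t1].
by apply/andP; split; lra.
Qed.

Lemma path_conn_trans a b c : path_conn a b -> path_conn b c -> path_conn a c.
Proof.
have I01_split : I01 = `[0, 1/2] `|` `[1/2, 1].
  apply/seteqP; split => t; rewrite /= !in_itv /=.
    move=> /andP[t0 t1]; have [t_le|t_gt] := lerP t (1/2); [left|right].
      by apply/andP; split => //; lra.
    by apply/andP; split => //; lra.
  by case=> /andP[t0 t1]; apply/andP; split; lra.
have first_half :
    {homo (fun t : R => 2 * t + 0) : t / `[0, 1/2]%classic t >-> I01 t}.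
  by move=> t; rewrite /= !in_itv /= => /andP[t0 t1]; apply/andP; split; lra.
have second_half :
    {homo (fun t : R => 2 * t + -1) : t / `[1/2, 1]%classic t >-> I01 t}.
  by move=> t; rewrite /= !in_itv /= => /andP[t0 t1]; apply/andP; split; lra.
have [half_ge0 half_lt1 twice_half twice_one] :
    [/\ 0 <= 1/2 :> R, 1/2 < 1 :> R, 2 * (1/2) = 1 :> R & 2 * 1 + -1 = 1 :> R].
  by split; lra.
move=> [s [cs [s0 s1]]] [u [cu [u0 u1]]].
(* The [+ 0] keeps both halves in the affine shape of [affine_path_continuous]. *)
exists (fun t => if t <= 1/2 then s (2 * t + 0) else u (2 * t + -1)).
split; last split.
- rewrite I01_split.
  apply: withinU_continuous; [exact: interval_closed | exact: interval_closed | |].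
  + apply: (subspace_eq_continuous (f := s \o (fun t => 2 * t + 0))).
      by move=> t; rewrite inE /= in_itv /from_subspace /= => /andP[_ ->].
    exact: affine_path_continuous first_half cs.
  + apply: (subspace_eq_continuous (f := u \o (fun t => 2 * t + -1))).
      move=> t; rewrite inE /= in_itv /from_subspace /= => /andP[t0 t1].
      have [t_le|//] := lerP t (1/2).
      by rewrite (@le_anti _ _ t (1/2)) ?t_le ?t0 // twice_half addr0 addrN s1 u0.
    exact: affine_path_continuous second_half cu.
- by rewrite half_ge0 mulr0 addr0 s0.
- by rewrite leNgt half_lt1 /= twice_one u1.
Qed.

Lemma path_conn_map (Y : topologicalType) (f : X -> Y) a b :
  continuous f -> path_conn a b -> path_conn (f a) (f b).
Proof.
move=> cf [s [cs [s0 s1]]]; exists (f \o s); split; last by rewrite /= s0 s1.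
by apply: within_continuous_comp cs => x _; exact: cf.
Qed.

Lemma path_componentsP (A : set X) a b :
  path_components A -> A a -> (A b <-> path_conn a b).
Proof.
move=> [x ->] /= xa; split; first exact: path_conn_trans (path_conn_sym xa).
exact: path_conn_trans xa.
Qed.

End PathConnected.

Lemma freeg_ind (K : choiceType) (P : {freeg K / int} -> Prop) :
  P 0 -> (forall c d, P c -> P d -> P (c + d)) -> (forall k x, P << k *g x >>) ->
  forall c, P c.
Proof.
move=> P0 PD PU c; rewrite -(freeg_sumE c).
by elim: (dom c) => [|z s IH]; rewrite ?big_nil // big_cons; apply: PD.
Qed.

Lemma freegUz (K : choiceType) (k : int) (x : K) :
  << k *g x >> = << x >> *~ k :> {freeg K / int}.
Proof. by rewrite freegU_mulz intz. Qed.

Section Boundaries.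
Context (X : topologicalType) (op : X -> X -> X).

Lemma boundary0 : boundary op 0.
Proof.
exists 0%N, (fun=> 0), (fun i : 'I_0 => match notF (ltn_ord i) with end).
by split; [case | rewrite big_ord0].
Qed.

Lemma boundary_sub_op a b : path_conn a b -> boundary op (<< a >> - << op a b >>).
Proof.
move=> [sigma [cs [<- <-]]].
by exists 1%N, (fun=> 1), (fun=> sigma); rewrite big_ord1.
Qed.

Lemma boundaryD c d : boundary op c -> boundary op d -> boundary op (c + d).
Proof.
move=> [n [k [s [hs ->]]]] [m [l [u [hu ->]]]].
exists (n + m)%N, (fun i => match split i with inl j => k j | inr j => l j end),
  (fun i => match split i with inl j => s j | inr j => u j end).
split; first by move=> i; case: (split i).
rewrite big_split_ord /=; congr (_ + _); apply: eq_bigr => i _.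
  by rewrite (unsplitK (inl i)).
by rewrite (unsplitK (inr i)).
Qed.

Lemma boundaryMz c z : boundary op c -> boundary op (c *~ z).
Proof.
move=> [n [k [s [hs ->]]]]; exists n, (fun i => k i * z), s; split => //.
by rewrite mulrz_suml; apply: eq_bigr => i _; rewrite mulrzA.
Qed.

Lemma boundaryN c : boundary op c -> boundary op (- c).
Proof. by rewrite -mulrN1z; exact: boundaryMz. Qed.

End Boundaries.

Section QuandlePaths.
Context (X : topologicalType) (op : X -> X -> X).
Hypothesis hq : is_topological_quandle op.

Lemma op_continuousr a : continuous (op a).
Proof.
case: hq => op_cont _ _ _ _ x.
apply: (@continuous_comp _ _ _ (pair a) (fun p : X * X => op p.1 p.2)).
  by apply: cvg_pair; [exact: cvg_cst | exact: cvg_id].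
exact: op_cont.
Qed.

Lemma path_conn_op a b : path_conn a b -> path_conn a (op a b).
Proof.
by case: hq => _ opxx _ _ _ /(path_conn_map (op_continuousr (a := a))); rewrite opxx.
Qed.

Lemma path_conn_opV w y z : op z w = y -> path_conn y w -> path_conn z w.
Proof.
case: hq => _ opxx _ /(_ w) [g [opK [_ [_ g_cont]]]] _ <-.
have gz : g (op z w) = z := opK z.
have gw : g w = w by rewrite -{1}(opxx w); exact: opK.
by move/(path_conn_map g_cont); rewrite gz gw.
Qed.

Lemma chain_boundary (A : set X) s y x : path_components A -> A y ->
  chain op A y s x -> boundary op (<< y >> - << x >>).
Proof.
move=> compA; elim: s y => [|[w e] s IH] y Ay /=.
  by move=> ->; rewrite subrr; exact: boundary0.
move=> [Aw [z [step chain_zx]]].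
have yw : path_conn y w by apply/(path_componentsP _ compA Ay).
have [Az yz] : A z /\ boundary op (<< y >> - << z >>).
  case: e step => step.
    rewrite step; split; last exact: boundary_sub_op.
    exact/(path_componentsP _ compA Ay)/path_conn_op.
  have zw := path_conn_opV step yw.
  split; first exact/(path_componentsP _ compA Aw)/path_conn_sym.
  by rewrite -step -opprB; apply/boundaryN/boundary_sub_op.
have -> : << y >> - << x >> = (<< y >> - << z >>) + (<< z >> - << x >>) :> C0 X.
  by rewrite addrA subrK.
exact: boundaryD yz (IH _ Az chain_zx).
Qed.

End QuandlePaths.

Section ComponentClasses.
Context (X : topologicalType).

Definition pcomp (x : X) : pcomps X := exist _ (path_comp x) (ex_intro _ x erefl).

Definition pcomp_rep (A : pcomps X) : X := sval (cid (svalP A)).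

Lemma pcomp_repE (A : pcomps X) : sval A = path_comp (pcomp_rep A).
Proof. exact: svalP (cid (svalP A)). Qed.

Lemma pcomp_repK : cancel pcomp_rep pcomp.
Proof. by case=> A compA; apply: eq_exist; rewrite -(pcomp_repE (exist _ A compA)). Qed.

Lemma pcomp_eq (a b : X) : path_conn a b -> pcomp a = pcomp b.
Proof.
move=> ab; apply: eq_exist; apply/seteqP; split => y /=.
  exact: path_conn_trans (path_conn_sym ab).
exact: path_conn_trans ab.
Qed.

Lemma path_conn_pcomp_rep (x : X) : path_conn (pcomp_rep (pcomp x)) x.
Proof. by rewrite -[X in X x](pcomp_repE (pcomp x)) /=; exact: path_conn_refl. Qed.

Definition pcomp_class : C0 X -> {freeg (pcomps X) / int} :=
  fglift (fun x => << pcomp x >>).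

Definition pcomp_lift : {freeg (pcomps X) / int} -> C0 X :=
  fglift (fun A => << pcomp_rep A >>).

HB.instance Definition _ :=
  GRing.isZmodMorphism.Build _ _ pcomp_class (lift_is_additive _).
HB.instance Definition _ :=
  GRing.isZmodMorphism.Build _ _ pcomp_lift (lift_is_additive _).

Lemma pcomp_class1 x : pcomp_class << x >> = << pcomp x >>.
Proof. by rewrite /pcomp_class liftU scale1r. Qed.

Lemma pcomp_lift1 A : pcomp_lift << A >> = << pcomp_rep A >>.
Proof. by rewrite /pcomp_lift liftU scale1r. Qed.

Lemma pcomp_liftK : cancel pcomp_lift pcomp_class.
Proof.
elim/freeg_ind => [|c d IHc IHd|k A]; first by rewrite !raddf0.
  by rewrite !raddfD /= IHc IHd.
by rewrite freegUz !raddfMz /= pcomp_lift1 pcomp_class1 pcomp_repK.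
Qed.

End ComponentClasses.

Section H0.
Context (X : topologicalType) (op : X -> X -> X).
Hypothesis hq : is_topological_quandle op.

Lemma pcomp_class_boundary c : boundary op c -> pcomp_class c = 0.
Proof.
move=> [n [k [sigma [paths ->]]]]; rewrite raddf_sum; apply: big1 => i _.
rewrite raddfMz /bd1 raddfB /= !pcomp_class1.
have path_i : path_conn (sigma i 0) (sigma i 1) by exists (sigma i).
by rewrite (pcomp_eq (path_conn_op hq path_i)) subrr mul0rz.
Qed.

Hypothesis hind : forall A : set X, path_components A -> indecomposable op A.

Lemma boundary_sub_pcomp_rep x : boundary op (<< pcomp_rep (pcomp x) >> - << x >>).
Proof.
have compA : path_components (path_comp x) by exists x.
have rep_in_comp := path_conn_sym (path_conn_pcomp_rep x).
have [s chain_rep_x] := hind compA (path_conn_refl x) rep_in_comp.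
exact: (chain_boundary hq compA rep_in_comp chain_rep_x).
Qed.

Lemma boundary_sub_pcomp_lift c : boundary op (pcomp_lift (pcomp_class c) - c).
Proof.
elim/freeg_ind: c => [|c d IHc IHd|k x].
- by rewrite !raddf0 addr0; exact: boundary0.
- by rewrite !raddfD /= addrACA; exact: boundaryD.
- rewrite freegUz !raddfMz /= pcomp_class1 pcomp_lift1 mulNrz -mulrzBl.
  exact/boundaryMz/boundary_sub_pcomp_rep.
Qed.

End H0.

Theorem mainTheorem7 (X : topologicalType) (op : X -> X -> X)
  (hq : is_topological_quandle op)
  (hind : forall A : set X, path_components A -> indecomposable op A) :
  exists phi : C0 X -> {freeg (pcomps X) / int},
    (forall c d : C0 X, phi (c - d) = phi c - phi d) /\
    (forall d : {freeg (pcomps X) / int}, exists c : C0 X, phi c = d) /\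
    (forall c : C0 X, phi c = 0 <-> boundary op c).
Proof.
exists (@pcomp_class X); split; first exact: raddfB.
split=> [d|c]; first by exists (pcomp_lift d); exact: pcomp_liftK.
split; last exact: pcomp_class_boundary.
move=> c0; rewrite -[c]opprK; apply: boundaryN.
by have := boundary_sub_pcomp_lift hq hind c; rewrite c0 raddf0 sub0r.
Qed.
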